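(* Let $\mu\ge\lambda>0$. Let $\zeta_t^O$ be the nearest neighbours three state contact process with parameters $(\lambda,\mu)$ started from the standard initial configuration, with $I_t=\{x:\zeta_t^O(x)=1\}$, $r_t=\sup I_t$, $l_t=\inf I_t$, and let $\xi_t^{\mathbb Z}$ be the nearest neighbours contact process with parameter $\mu$ started from $\mathbb Z$, the two coupled by the graphical construction. Then for all $t\ge0$, $I_t=\xi_t^{\mathbb Z}\cap[l_t,r_t]$ on the event $\{I_t\ne\emptyset\}$.
   Context: The nearest neighbours three state contact process with parameters $(\lambda,\mu)$ has state space $\{-1,0,1\}^{\mathbb Z}$; each site $x$ makes transitions $-1\to1$ at rate $\lambda n_t(x)$, $0\to1$ at rate $\mu n_t(x)$, $1\to0$ at rate 1, where $n_t(x)$ is the number of $y\in\{x-1,x+1\}$ in state 1. The standard initial configuration has the origin in state 1 and all other sites in state $-1$. Graphical construction (for $\mu\ge\lambda$): for each $x\in\mathbb Z$ and $y\in\{x-1,x+1\}$ take independent Poisson processes of rate $\lambda$ ($\lambda$-arrows from $x$ to $y$) and rate $\mu-\lambda$ ($(\mu-\lambda)$-arrows from $x$ to $y$), and for each $x$ an independent rate-1 Poisson process of recovery marks at $x$. The three state process is defined from these: at a $\lambda$-arrow from $x$ to $y$, if just before $x$ is in state 1 and $y$ in state $0$ or $-1$, then $y$ becomes 1; at a $(\mu-\lambda)$-arrow from $x$ to $y$, if just before $x$ is in state 1 and $y$ in state 0, then $y$ becomes 1; at a recovery mark at $x$, if $x$ is in state 1 it becomes 0. The contact process with parameter $\mu$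 started from $A\subseteq\mathbb Z$ is $\xi_t^A=\{y:$ there is an oriented path from $(x,0)$ for some $x\in A$ to $(y,t)$ moving up time lines in increasing time without passing through a recovery mark and along arrows of either type in the direction of the arrow$\}$. Processes built from the same realization are said to be coupled by the graphical construction. *)

From Stdlib Require Import Reals ZArith List.
Open Scope R_scope.

(** A direction [d : bool] at site [x]
    denotes the neighbour [nb x d] (x+1 if d, x-1 otherwise).
    - [Lam x d]  : a lambda-arrow from x to nb x d   (rate lambda)
    - [Mu x d]   : a (mu-lambda)-arrow from x to nb x d (rate mu - lambda)
    - [Rec x]    : a recovery mark at x (rate 1) *)
Inductive Ev : Type :=
| Lam : Z -> bool -> Ev
| Mu  : Z -> bool -> Ev
| Rec : Z -> Ev.

Definition nb (x : Z) (d : bool) : Z := if d then (x + 1)%Z else (x - 1)%Z.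

(** A realization of the graphical construction: [occ e s] means that the
    Poisson process of event [e] has a point at time [s]. *)
Definition Realization := Ev -> R -> Prop.

(** Almost-sure properties of a realization of the independent Poisson
    processes (each holds with probability one). *)
Definition realization_ok (occ : Realization) : Prop :=
  (forall e s, occ e s -> 0 < s) /\
  (forall e T, exists l : list R, forall s, occ e s -> s <= T -> In s l) /\
  (forall e1 e2 s, occ e1 s -> occ e2 s -> e1 = e2) /\
  (forall T N, exists n, (N <= n)%Z /\
     forall s, s <= T ->
       ~ occ (Lam n true) s /\ ~ occ (Mu n true) s /\
       ~ occ (Lam (n+1) false) s /\ ~ occ (Mu (n+1) false) s) /\
  (forall T N, exists n, (n <= - N)%Z /\
     forall s, s <= T ->
       ~ occ (Lam n true) s /\ ~ occ (Mu n true) s /\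
       ~ occ (Lam (n+1) false) s /\ ~ occ (Mu (n+1) false) s).

Inductive cpath (occ : Realization) : Z -> R -> Z -> R -> Prop :=
| cpath_stay : forall x s t, s <= t ->
    (forall u, s <= u <= t -> ~ occ (Rec x) u) -> cpath occ x s x t
| cpath_jump : forall x s u d y t, s <= u ->
    (forall v, s <= v <= u -> ~ occ (Rec x) v) ->
    (occ (Lam x d) u \/ occ (Mu x d) u) ->
    cpath occ (nb x d) u y t -> cpath occ x s y t.

(** The contact process with parameter mu started from A. *)
Definition xi (occ : Realization) (A : Z -> Prop) (t : R) (y : Z) : Prop :=
  exists x, A x /\ cpath occ x 0 y t.

Inductive St : Type := Sm1 | S0 | S1.

Definition std_init (x : Z) : St := if Z.eqb x 0 then S1 else Sm1.

Definition arrow_into (occ : Realization) (x : Z) (u : R) : Prop :=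
  exists y d, nb y d = x /\ (occ (Lam y d) u \/ occ (Mu y d) u).

Definition three_state_process (occ : Realization) (z0 : Z -> St)
    (zeta : R -> Z -> St) : Prop :=
  zeta 0 = z0 /\
  (forall x a b, 0 <= a <= b ->
     (forall u, a < u <= b -> ~ occ (Rec x) u /\ ~ arrow_into occ x u) ->
     zeta b x = zeta a x) /\
  (forall x s, occ (Rec x) s ->
     exists eps, 0 < eps /\ exists a,
       (forall u, s - eps < u < s -> zeta u x = a) /\
       zeta s x = (match a with S1 => S0 | _ => a end)) /\
  (forall y d s, occ (Lam y d) s ->
     exists eps, 0 < eps /\ exists a b,
       (forall u, s - eps < u < s -> zeta u y = a /\ zeta u (nb y d) = b) /\
       zeta s (nb y d) = (match a with S1 => S1 | _ => b end)) /\
  (forall y d s, occ (Mu y d) s ->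
     exists eps, 0 < eps /\ exists a b,
       (forall u, s - eps < u < s -> zeta u y = a /\ zeta u (nb y d) = b) /\
       zeta s (nb y d) = (match a, b with S1, S0 => S1 | _, _ => b end)).

Definition occupied (zeta : R -> Z -> St) (t : R) (x : Z) : Prop :=
  zeta t x = S1.

(** y in [inf I, sup I] for a set I of integers (inf/sup possibly infinite):
    equivalently there are a, b in I with a <= y <= b. *)
Definition in_hull (I : Z -> Prop) (y : Z) : Prop :=
  exists a b, I a /\ I b /\ (a <= y <= b)%Z.

From Stdlib Require Import Reals ZArith List Lra Lia Classical.
Open Scope R_scope.

(* Before time t only finitely many events act on a box (n1, n2] of sites
   whose boundary edges {n1, n1+1} and {n2, n2+1} are crossed by no arrow,
   so one can follow the box event by event.  Three properties of the
   configuration inside the box are preserved by every event: occupied sites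
   are reached by contact paths from time 0 (I_t is contained in xi_t^Z); the
   sites that are not in state -1 form an interval; and every site of xi_t^Z
   lying between two occupied sites is occupied.  The second property is what
   lets the third survive a (mu-lambda)-arrow, which only infects sites in
   state 0: an arrow from an occupied site into the hull of the occupied
   sites always lands on a site that is not in state -1. *)

Definition blocked (occ : Realization) (T : R) (n : Z) : Prop :=
  forall s, s <= T ->
    ~ occ (Lam n true) s /\ ~ occ (Mu n true) s /\
    ~ occ (Lam (n + 1) false) s /\ ~ occ (Mu (n + 1) false) s.

Definition site (e : Ev) : Z :=
  match e with Lam w _ | Mu w _ | Rec w => w end.

Definition affects (e : Ev) (z : Z) : Prop :=
  match e with Rec w => w = z | Lam y d | Mu y d => nb y d = z end.

Lemma nb_neq x d : nb x d <> x.
Proof. destruct d; simpl; lia. Qed.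

Section Paths.
Variable occ : Realization.

Lemma cpath_le x s y t : cpath occ x s y t -> s <= t.
Proof. induction 1; lra. Qed.

Lemma cpath_blocked_left T n : blocked occ T n ->
  forall x s y t, cpath occ x s y t -> t <= T -> (x <= n)%Z -> (y <= n)%Z.
Proof.
  intros Hb x s y t H.
  induction H as [x s t Hst Hnr | x s u d y t Hsu Hnr Harr Hc IH]; intros Ht Hx; auto.
  apply IH; auto.
  assert (Hu : u <= T) by (pose proof (cpath_le _ _ _ _ Hc); lra).
  destruct (Z.eq_dec x n) as [->|Hne]; [|destruct d; simpl; lia].
  destruct (Hb u Hu) as [HL [HM _]].
  destruct d; simpl; [destruct Harr; contradiction | lia].
Qed.

Lemma cpath_blocked_right T n : blocked occ T n ->
  forall x s y t, cpath occ x s y t -> t <= T -> (n + 1 <= x)%Z -> (n + 1 <= y)%Z.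
Proof.
  intros Hb x s y t H.
  induction H as [x s t Hst Hnr | x s u d y t Hsu Hnr Harr Hc IH]; intros Ht Hx; auto.
  apply IH; auto.
  assert (Hu : u <= T) by (pose proof (cpath_le _ _ _ _ Hc); lra).
  destruct (Z.eq_dec x (n + 1)) as [->|Hne]; [|destruct d; simpl; lia].
  destruct (Hb u Hu) as [_ [_ [HL HM]]].
  destruct d; simpl; [lia | destruct Harr; contradiction].
Qed.

Lemma cpath_wait x m z t s : cpath occ x m z t -> s <= m ->
  (forall v, s <= v <= m -> ~ occ (Rec x) v) -> cpath occ x s z t.
Proof.
  intros H Hs Hnr'.
  destruct H as [x m t Hmt Hnr | x m u d y t Hmu Hnr Harr Hc].
  - apply cpath_stay; [lra|]. intros v Hv.
    destruct (Rle_dec v m); [apply Hnr' | apply Hnr]; lra.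
  - apply (cpath_jump _ x s u d); [lra| |exact Harr|exact Hc]. intros v Hv.
    destruct (Rle_dec v m); [apply Hnr' | apply Hnr]; lra.
Qed.

Lemma cpath_trans x s w m z t :
  cpath occ x s w m -> cpath occ w m z t -> cpath occ x s z t.
Proof.
  intros H; revert z t.
  induction H as [x s m Hsm Hnr | x s u d y m Hsu Hnr Harr Hc IH]; intros z t H'.
  - exact (cpath_wait _ _ _ _ _ H' Hsm Hnr).
  - exact (cpath_jump _ x s u d z t Hsu Hnr Harr (IH _ _ H')).
Qed.

Lemma cpath_split x s z t m : cpath occ x s z t -> s <= m <= t ->
  exists w, cpath occ x s w m /\ cpath occ w m z t.
Proof.
  intros H; revert m.
  induction H as [x s t Hst Hnr | x s u d y t Hsu Hnr Harr Hc IH]; intros m Hm.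
  - exists x; split; apply cpath_stay; try lra; intros v Hv; apply Hnr; lra.
  - destruct (Rle_lt_dec m u).
    + exists x; split.
      * apply cpath_stay; [lra|]. intros v Hv; apply Hnr; lra.
      * apply (cpath_jump _ x m u d); [lra| |exact Harr|exact Hc].
        intros v Hv; apply Hnr; lra.
    + pose proof (cpath_le _ _ _ _ Hc).
      destruct (IH m) as [w [H1 H2]]; [lra|].
      exists w; split; auto. exact (cpath_jump _ x s u d w m Hsu Hnr Harr H1).
Qed.

End Paths.

Fixpoint count_le (l : list R) (s : R) : nat :=
  match l with
  | nil => O
  | v :: l' => ((if Rle_dec v s then 1 else 0) + count_le l' s)%nat
  end.

Lemma count_le_mono l u s : u <= s -> (count_le l u <= count_le l s)%nat.
Proof.
  intros H; induction l as [|a l IH]; simpl; [lia|].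
  destruct (Rle_dec a u); destruct (Rle_dec a s); try lia; lra.
Qed.

Lemma count_le_lt l u m s : u < m -> m <= s -> In m l ->
  (count_le l u < count_le l s)%nat.
Proof.
  intros H1 H2; induction l as [|a l IH]; simpl; [tauto|].
  intros [->|Hm].
  - pose proof (count_le_mono l u s ltac:(lra)).
    destruct (Rle_dec m u); destruct (Rle_dec m s); try lia; lra.
  - specialize (IH Hm).
    destruct (Rle_dec a u); destruct (Rle_dec a s); try lia; lra.
Qed.

Lemma exists_last_le (P : R -> Prop) l s :
  (forall x, In x l -> P x -> s < x) \/
  (exists m, In m l /\ P m /\ m <= s /\
     forall x, In x l -> P x -> x <= s -> x <= m).
Proof.
  induction l as [|a l [H|[m [Hm1 [Hm2 [Hm3 Hm4]]]]]].
  - left; intros x [].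
  - destruct (classic (P a /\ a <= s)) as [[Pa Ha]|Hn].
    + right; exists a; repeat split; auto; [left; auto|].
      intros x [<-|Hx] Px Hxs; [lra|]. specialize (H x Hx Px); lra.
    + left; intros x [<-|Hx] Px; [|auto].
      apply Rnot_le_lt; intro; apply Hn; auto.
  - destruct (classic (P a /\ a <= s /\ m < a)) as [[Pa [Ha Hma]]|Hn].
    + right; exists a; repeat split; auto; [left; auto|].
      intros x [<-|Hx] Px Hxs; [lra|]. specialize (Hm4 x Hx Px Hxs); lra.
    + right; exists m; repeat split; auto; [right; auto|].
      intros x [<-|Hx] Px Hxs; [|auto].
      apply Rnot_lt_le; intro; apply Hn; auto.
Qed.

Lemma exists_between_lt a b m : a < m -> b < m -> exists u, a < u < m /\ b < u.
Proof.
  intros Ha Hb. exists ((Rmax a b + m) / 2).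
  pose proof (Rmax_l a b). pose proof (Rmax_r a b).
  pose proof (Rmax_lub_lt a b m Ha Hb). lra.
Qed.

Section EventTimeInduction.
Variables (E : R -> Prop) (T : R) (L : list R).
Hypothesis E_pos : forall v, E v -> 0 < v.
Hypothesis E_in_L : forall v, E v -> v <= T -> In v L.

Lemma gap_before m : 0 < m ->
  exists lo, 0 <= lo < m /\ forall x, In x L -> x < m -> x <= lo.
Proof.
  intros Hm.
  destruct (exists_last_le (fun x => x < m) L m) as [H0|[m' [_ [Hm'1 [_ Hm'2]]]]].
  - exists 0; split; [lra|]. intros x Hx Hxm. specialize (H0 x Hx Hxm); lra.
  - exists (Rmax 0 m'); split.
    + split; [apply Rmax_l | apply Rmax_lub_lt; lra].
    + intros x Hx Hxm. specialize (Hm'2 x Hx Hxm ltac:(lra)).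
      pose proof (Rmax_r 0 m'); lra.
Qed.

Lemma event_time_ind (P : R -> Prop) :
  (forall s, 0 <= s <= T -> (forall v, v <= s -> ~ E v) -> P s) ->
  (forall m s lo, 0 <= lo < m -> m <= s <= T -> E m ->
     (forall v, lo < v <= s -> E v -> v = m) ->
     (forall u, lo < u < m -> P u) -> P s) ->
  forall s, 0 <= s <= T -> P s.
Proof.
  intros Hbase Hstep.
  enough (Hn : forall n s, (count_le L s < n)%nat -> 0 <= s <= T -> P s)
    by (intros s Hs; exact (Hn _ s (Nat.lt_succ_diag_r _) Hs)).
  induction n as [|n IH]; intros s Hc Hs; [lia|].
  destruct (exists_last_le E L s) as [Hnone|[m [HmL [Hm [Hms Hmax]]]]].
  - apply Hbase; auto. intros v Hv HE.
    specialize (Hnone v (E_in_L v HE ltac:(lra)) HE); lra.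
  - destruct (gap_before m (E_pos m Hm)) as [lo [Hlo Hgap]].
    apply (Hstep m s lo); auto; [lra| |].
    + intros v Hv HE. pose proof (E_in_L v HE ltac:(lra)) as HvL.
      destruct (Rtotal_order v m) as [Hlt|[Heq|Hgt]]; auto.
      * specialize (Hgap v HvL Hlt); lra.
      * specialize (Hmax v HvL HE ltac:(lra)); lra.
    + intros u Hu. apply IH; [|lra].
      pose proof (count_le_lt L u m s ltac:(lra) Hms HmL). lia.
Qed.

End EventTimeInduction.

Section Box.
Variables (occ : Realization) (zeta : R -> Z -> St) (T : R) (n1 n2 : Z).
Hypothesis occ_pos : forall e s, occ e s -> 0 < s.
Hypothesis occ_disjoint : forall e1 e2 s, occ e1 s -> occ e2 s -> e1 = e2.
Hypothesis zeta_process : three_state_process occ std_init zeta.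
Hypothesis blocked_n1 : blocked occ T n1.
Hypothesis blocked_n2 : blocked occ T n2.

Definition inbox (z : Z) : Prop := (n1 < z <= n2)%Z.

Definition box_event (v : R) : Prop := exists e, inbox (site e) /\ occ e v.

Lemma nb_inbox w d v : inbox w -> occ (Lam w d) v \/ occ (Mu w d) v -> v <= T ->
  inbox (nb w d).
Proof.
  unfold inbox; intros Hw Harr Hv. destruct d; simpl.
  - destruct (Z.eq_dec w n2) as [->|]; [|lia].
    destruct (blocked_n2 v Hv) as [HL [HM _]]; destruct Harr; contradiction.
  - destruct (Z.eq_dec w (n1 + 1)) as [->|]; [|lia].
    destruct (blocked_n1 v Hv) as [_ [_ [HL HM]]]; destruct Harr; contradiction.
Qed.

Lemma arrow_into_inbox z v : inbox z -> arrow_into occ z v -> v <= T ->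
  exists y d, inbox y /\ nb y d = z /\ (occ (Lam y d) v \/ occ (Mu y d) v).
Proof.
  intros Hzb [y [d [Hnb Harr]]] Hv.
  destruct (classic (inbox y)) as [Hy|Hy]; [exists y, d; auto|].
  exfalso. unfold inbox in *. destruct d; simpl in Hnb.
  - assert (y = n1) as -> by lia.
    destruct (blocked_n1 v Hv) as [HL [HM _]]; destruct Harr; contradiction.
  - assert (y = n2 + 1)%Z as -> by lia.
    destruct (blocked_n2 v Hv) as [_ [_ [HL HM]]]; destruct Harr; contradiction.
Qed.

Lemma cpath_source_inbox w u z s : cpath occ w u z s -> s <= T -> inbox z -> inbox w.
Proof.
  intros H Hs Hzb. unfold inbox in *.
  destruct (Z_le_gt_dec w n1) as [Hw|Hw].
  - pose proof (cpath_blocked_left _ _ _ blocked_n1 _ _ _ _ H Hs Hw). lia.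
  - destruct (Z_le_gt_dec w n2); [lia|].
    pose proof (cpath_blocked_right _ _ _ blocked_n2 _ _ _ _ H Hs ltac:(lia)). lia.
Qed.

Lemma zeta_const_inbox z a b : inbox z -> 0 <= a <= b -> b <= T ->
  (forall v e, a < v <= b -> inbox (site e) -> occ e v -> ~ affects e z) ->
  zeta b z = zeta a z.
Proof.
  intros Hzb Hab HbT H.
  destruct zeta_process as [_ [Hconst _]]. apply Hconst; [lra|]. intros v Hv; split.
  - intro HR. exact (H v (Rec z) Hv Hzb HR eq_refl).
  - intro HA.
    destruct (arrow_into_inbox z v Hzb HA ltac:(lra)) as [y [d [Hy [Hnb [HL|HM]]]]].
    + exact (H v (Lam y d) Hv Hy HL Hnb).
    + exact (H v (Mu y d) Hv Hy HM Hnb).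
Qed.

Definition moves_at (m : R) (w z : Z) : Prop :=
  (w = z /\ ~ occ (Rec z) m) \/
  (exists d, nb w d = z /\ (occ (Lam w d) m \/ occ (Mu w d) m)).

Lemma cpath_stays_without_events a m y t : cpath occ a m y t -> inbox a ->
  (forall d, ~ occ (Lam a d) m /\ ~ occ (Mu a d) m) ->
  (forall v, m < v <= t -> ~ box_event v) -> a = y.
Proof.
  intros H Ha Hout Hnone.
  destruct H as [x s t Hst Hnr | x s u d y t Hsu Hnr Harr Hc]; auto.
  exfalso. pose proof (cpath_le _ _ _ _ _ Hc).
  destruct (Req_dec u s) as [->|Hne].
  - destruct (Hout d); destruct Harr; contradiction.
  - apply (Hnone u); [lra|].
    destruct Harr as [Harr|Harr]; [exists (Lam x d) | exists (Mu x d)]; auto.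
Qed.

Lemma cpath_across_event w z u m s : inbox w -> inbox z ->
  u < m -> m <= s -> s <= T ->
  (forall v, u <= v <= s -> box_event v -> v = m) ->
  cpath occ w u z s <-> moves_at m w z.
Proof.
  intros Hw Hzb Hum Hms HsT Honly.
  assert (Hrec : forall x v, inbox x -> u <= v <= s -> occ (Rec x) v -> v = m)
    by (intros x v Hx Hv HR; apply Honly; [lra | exists (Rec x); auto]).
  split.
  - intros H. destruct H as [x s t Hst Hnr | x s u' d y t Hsu Hnr Harr Hc].
    + left; split; auto. apply Hnr; lra.
    + right. pose proof (cpath_le _ _ _ _ _ Hc).
      assert (u' = m) as ->.
      { apply Honly; [lra|].
        destruct Harr as [Harr|Harr]; [exists (Lam x d) | exists (Mu x d)]; auto. }
      exists d; split; auto.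
      apply (cpath_stays_without_events _ _ _ _ Hc).
      * exact (nb_inbox x d m Hw Harr ltac:(lra)).
      * intros d'; split; intro Ho; destruct Harr as [Harr|Harr];
          pose proof (occ_disjoint _ _ _ Ho Harr) as E; try discriminate E;
          injection E as E _; exact (nb_neq x d E).
      * intros v Hv HE. pose proof (Honly v ltac:(lra) HE). lra.
  - intros [[<- Hnr]|[d [Hnb Harr]]].
    + apply cpath_stay; [lra|]. intros v Hv HR.
      rewrite (Hrec w v Hw ltac:(lra) HR) in HR. contradiction.
    + assert (Hno : forall x v, inbox x -> u <= v <= s -> ~ occ (Rec x) v).
      { intros x v Hx Hv HR. rewrite (Hrec x v Hx Hv HR) in HR.
        destruct Harr as [Ha|Ha]; discriminate (occ_disjoint _ _ _ HR Ha). }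
      apply (cpath_jump _ w u m d); [lra | intros v Hv; apply Hno; auto; lra | exact Harr |].
      rewrite Hnb. apply cpath_stay; [lra|]. intros v Hv; apply Hno; auto; lra.
Qed.

Definition box_invariant (f : Z -> St) (X : Z -> Prop) : Prop :=
  (forall z, inbox z -> f z = S1 -> X z) /\
  (forall z1 z z2, inbox z1 -> inbox z2 -> (z1 <= z <= z2)%Z ->
     f z1 <> Sm1 -> f z2 <> Sm1 -> f z <> Sm1) /\
  (forall a z b, inbox a -> inbox b -> (a <= z <= b)%Z -> f a = S1 -> f b = S1 ->
     X z -> f z = S1).

Lemma box_invariant_init (f : Z -> St) (X : Z -> Prop) :
  (forall z, inbox z -> f z = std_init z) -> (forall z, inbox z -> X z) ->
  box_invariant f X.
Proof.
  intros Hf HX.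
  assert (Hnot : forall z, inbox z -> f z <> Sm1 -> z = 0%Z).
  { intros z Hz Hn. rewrite Hf in Hn by exact Hz. unfold std_init in Hn.
    destruct (Z.eqb_spec z 0); congruence. }
  split; [|split].
  - auto.
  - intros z1 z z2 H1 H2 Hz Hn1 Hn2.
    pose proof (Hnot z1 H1 Hn1); pose proof (Hnot z2 H2 Hn2).
    assert (z = 0)%Z as -> by lia.
    rewrite Hf by (unfold inbox in *; lia). discriminate.
  - intros a z b Ha Hb Hz Hfa Hfb _.
    pose proof (Hnot a Ha ltac:(congruence)); pose proof (Hnot b Hb ltac:(congruence)).
    assert (z = a) as -> by lia. exact Hfa.
Qed.

Lemma box_invariant_rec_update (f g : Z -> St) (Xu Xs : Z -> Prop) w : inbox w ->
  (forall z, inbox z -> z <> w -> g z = f z) ->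
  g w = (match f w with S1 => S0 | a => a end) ->
  (forall z, inbox z -> Xs z -> Xu z /\ z <> w) ->
  (forall z, inbox z -> z <> w -> Xu z -> Xs z) ->
  box_invariant f Xu -> box_invariant g Xs.
Proof.
  intros Hw Hoth Hgw HXs HXu [IA [IC IP]].
  assert (HS1 : forall q, inbox q -> g q = S1 -> q <> w /\ f q = S1).
  { intros q Hq Hg. destruct (Z.eq_dec q w) as [->|Hne].
    - rewrite Hgw in Hg. destruct (f w); discriminate.
    - rewrite Hoth in Hg; auto. }
  assert (Hm1 : forall q, inbox q -> (g q <> Sm1 <-> f q <> Sm1)).
  { intros q Hq. destruct (Z.eq_dec q w) as [->|Hne].
    - rewrite Hgw. destruct (f w); split; congruence.
    - rewrite Hoth; tauto. }
  split; [|split].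
  - intros z Hzb Hg. destruct (HS1 z Hzb Hg). auto.
  - intros z1 z z2 H1 H2 Hzz Hn1 Hn2.
    assert (inbox z) by (unfold inbox in *; lia).
    apply Hm1; auto. apply (IC z1 z z2); auto; apply Hm1; auto.
  - intros a z b Ha Hb Hzz Hga Hgb HX.
    assert (Hzb : inbox z) by (unfold inbox in *; lia).
    destruct (HXs z Hzb HX) as [HXz Hne].
    destruct (HS1 a Ha Hga); destruct (HS1 b Hb Hgb).
    rewrite Hoth; auto. apply (IP a z b); auto.
Qed.

Definition arrow_effect (source target target' : St) : Prop :=
  (source = S1 /\ target' = S1) \/
  (target' = target /\ (source <> S1 \/ target <> S0)).

Lemma box_invariant_arrow_update (f g : Z -> St) (Xu Xs : Z -> Prop) w w' :
  inbox w -> inbox w' -> (w' = w + 1 \/ w' = w - 1)%Z ->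
  (forall z, inbox z -> z <> w' -> g z = f z) ->
  arrow_effect (f w) (f w') (g w') ->
  (forall z, inbox z -> Xs z -> Xu z \/ (z = w' /\ Xu w)) ->
  (forall z, inbox z -> Xu z -> Xs z) ->
  (Xu w -> Xs w') ->
  box_invariant f Xu -> box_invariant g Xs.
Proof.
  intros Hw Hw' Hadj Hoth Hnew HXs HXu HXw [IA [IC IP]].
  split; [|split].
  - intros z Hzb Hg. destruct (Z.eq_dec z w') as [->|Hne].
    + destruct Hnew as [[Hfw _]|[Hgw _]]; [auto|].
      apply HXu; auto. apply IA; auto; congruence.
    + rewrite Hoth in Hg; auto.
  - assert (F1 : forall q, inbox q -> f q <> Sm1 -> g q <> Sm1).
    { intros q Hq Hfq. destruct (Z.eq_dec q w') as [->|Hne].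
      - destruct Hnew as [[_ HG]|[HG _]]; rewrite HG; auto; discriminate.
      - rewrite Hoth; auto. }
    assert (F2 : forall q, inbox q -> g q <> Sm1 -> f q <> Sm1 \/ (q = w' /\ f w = S1)).
    { intros q Hq Hgq. destruct (Z.eq_dec q w') as [->|Hne].
      - destruct Hnew as [[Hfw _]|[HG _]]; [right; auto | left; congruence].
      - left; rewrite <- Hoth; auto. }
    (* an endpoint that just became non -1 can be replaced by the source [w] *)
    intros z1 z z2 H1 H2 Hzz Hn1 Hn2.
    assert (Hzb : inbox z) by (unfold inbox in *; lia).
    destruct (Z.eq_dec z z1) as [->|Hne1]; auto.
    destruct (Z.eq_dec z z2) as [->|Hne2]; auto.
    apply F1; auto.
    assert (Hl : exists z1', inbox z1' /\ (z1' <= z)%Z /\ f z1' <> Sm1).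
    { destruct (F2 z1 H1 Hn1) as [Hf1|[-> Hfw]]; [exists z1; auto with zarith|].
      exists w; split; [auto | split; [lia | rewrite Hfw; discriminate]]. }
    assert (Hr : exists z2', inbox z2' /\ (z <= z2')%Z /\ f z2' <> Sm1).
    { destruct (F2 z2 H2 Hn2) as [Hf2|[-> Hfw]]; [exists z2; auto with zarith|].
      exists w; split; [auto | split; [lia | rewrite Hfw; discriminate]]. }
    destruct Hl as [z1' [Ha1 [Ha2 Ha3]]]; destruct Hr as [z2' [Hc1 [Hc2 Hc3]]].
    apply (IC z1' z z2'); auto.
  - intros a z b Ha Hb Hzz Hga Hgb HX.
    assert (Hzb : inbox z) by (unfold inbox in *; lia).
    destruct Hnew as [[Hfw Hgw]|[Hgw Hineff]].
    + destruct (Z.eq_dec z w') as [->|Hne]; auto.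
      rewrite Hoth; auto.
      destruct (HXs z Hzb HX) as [HXz|[Heq _]]; [|contradiction].
      assert (Hl : exists a', inbox a' /\ (a' <= z)%Z /\ f a' = S1).
      { destruct (Z.eq_dec a w') as [->|Hna]; [exists w; auto with zarith|].
        exists a; split; [auto | split; [lia | rewrite <- Hoth; auto]]. }
      assert (Hr : exists b', inbox b' /\ (z <= b')%Z /\ f b' = S1).
      { destruct (Z.eq_dec b w') as [->|Hnb]; [exists w; auto with zarith|].
        exists b; split; [auto | split; [lia | rewrite <- Hoth; auto]]. }
      destruct Hl as [a' [Ha1 [Ha2 Ha3]]]; destruct Hr as [b' [Hc1 [Hc2 Hc3]]].
      apply (IP a' z b'); auto.
    + assert (Hsame : forall q, inbox q -> g q = f q).
      { intros q Hq; destruct (Z.eq_dec q w') as [->|]; auto. }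
      rewrite Hsame in Hga, Hgb |- *; auto.
      destruct (HXs z Hzb HX) as [HXz|[-> HXuw]]; [apply (IP a z b); auto|].
      (* an ineffective arrow into the hull of the occupied sites is impossible:
         its source would be occupied and its target in state 0 *)
      destruct (classic (f w = S1)) as [Hfw|Hfw].
      * destruct Hineff as [Hineff|Hineff]; [contradiction|].
        destruct (f w') eqn:E; auto; try contradiction.
        exfalso. apply (IC a w' b); auto; congruence.
      * destruct (classic (a <= w <= b)%Z).
        -- exfalso; apply Hfw; apply (IP a w b); auto.
        -- assert (w' = a \/ w' = b)%Z as [-> | ->] by lia; auto.
Qed.

Lemma zeta_const_across_event z u m s : inbox z -> 0 <= u < m -> m <= s <= T ->
  (forall v, u <= v <= s -> box_event v -> v = m) ->
  (forall e, occ e m -> ~ affects e z) ->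
  zeta s z = zeta u z.
Proof.
  intros Hzb Hu Hms Honly Hm. apply zeta_const_inbox; auto; [lra|lra|].
  intros v e Hv He Ho.
  rewrite (Honly v ltac:(lra) (ex_intro _ e (conj He Ho))) in Ho. exact (Hm e Ho).
Qed.

Lemma zeta_const_after_event z m s : inbox z -> 0 <= m <= s -> s <= T ->
  (forall v, m <= v <= s -> box_event v -> v = m) ->
  zeta s z = zeta m z.
Proof.
  intros Hzb Hms HsT Honly. apply zeta_const_inbox; auto.
  intros v e Hv He Ho.
  pose proof (Honly v ltac:(lra) (ex_intro _ e (conj He Ho))). lra.
Qed.

Lemma xi_across_event z u m s : inbox z -> 0 <= u < m -> m <= s <= T ->
  (forall v, u <= v <= s -> box_event v -> v = m) ->
  xi occ (fun _ => True) s z <->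
  exists w, inbox w /\ xi occ (fun _ => True) u w /\ moves_at m w z.
Proof.
  intros Hzb Hu Hms Honly. split.
  - intros [x [_ Hx]].
    destruct (cpath_split _ _ _ _ _ u Hx ltac:(lra)) as [w [H1 H2]].
    pose proof (cpath_source_inbox _ _ _ _ H2 ltac:(lra) Hzb) as Hw.
    exists w; split; [|split]; [exact Hw | exists x; auto |].
    apply (cpath_across_event w z u m s); auto; lra.
  - intros [w [Hw [[x [_ Hx]] Hmove]]]. exists x; split; [exact I|].
    apply (cpath_trans _ _ _ w u); [exact Hx|].
    apply (cpath_across_event w z u m s); auto; lra.
Qed.

Lemma box_invariant_across_rec w m s lo : 0 <= lo < m -> m <= s <= T ->
  inbox w -> occ (Rec w) m ->
  (forall v, lo < v <= s -> box_event v -> v = m) ->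
  (forall u, lo < u < m -> box_invariant (zeta u) (xi occ (fun _ => True) u)) ->
  box_invariant (zeta s) (xi occ (fun _ => True) s).
Proof.
  intros Hlo Hms Hw HR Honly IH.
  destruct zeta_process as [_ [_ [Hrec _]]].
  destruct (Hrec w m HR) as [eps [Heps [a [Hbefore Hm]]]].
  destruct (exists_between_lt lo (m - eps) m) as [u [Hu Hueps]]; [lra|lra|].
  assert (Honly' : forall v, u <= v <= s -> box_event v -> v = m)
    by (intros v Hv; apply Honly; lra).
  assert (Hno_arrow : forall y d, ~ occ (Lam y d) m /\ ~ occ (Mu y d) m)
    by (intros y d; split; intro Ho; discriminate (occ_disjoint _ _ _ Ho HR)).
  apply (box_invariant_rec_update (zeta u) (zeta s) (xi occ (fun _ => True) u) (xi occ (fun _ => True) s) w Hw); [| | | |apply IH; lra].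
  - intros z Hzb Hne. apply (zeta_const_across_event z u m s); auto; [lra|].
    intros e Ho. rewrite (occ_disjoint _ _ _ Ho HR). simpl; congruence.
  - rewrite (zeta_const_after_event w m s Hw ltac:(lra) ltac:(lra))
      by (intros v Hv; apply Honly'; lra).
    rewrite Hm, (Hbefore u ltac:(lra)). destruct a; reflexivity.
  - intros z Hzb Hxi.
    destruct (proj1 (xi_across_event z u m s Hzb ltac:(lra) Hms Honly') Hxi)
      as [v [_ [Hxiv [[-> Hnr]|[d [_ [Ho|Ho]]]]]]].
    + split; [exact Hxiv|]. intros ->; contradiction.
    + destruct (Hno_arrow v d); contradiction.
    + destruct (Hno_arrow v d); contradiction.
  - intros z Hzb Hne Hxi.
    apply (xi_across_event z u m s Hzb ltac:(lra) Hms Honly').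
    exists z; split; [|split]; auto. left; split; auto.
    intro Ho. apply Hne. injection (occ_disjoint _ _ _ Ho HR); auto.
Qed.

Lemma arrow_effect_near w d m : occ (Lam w d) m \/ occ (Mu w d) m ->
  exists eps, 0 < eps /\ forall u, m - eps < u < m ->
    arrow_effect (zeta u w) (zeta u (nb w d)) (zeta m (nb w d)).
Proof.
  destruct zeta_process as [_ [_ [_ [Hlam Hmu]]]].
  intros [Ho|Ho]; [destruct (Hlam w d m Ho) as [eps [Heps [a [b [Hbefore Hm]]]]]
                  |destruct (Hmu w d m Ho) as [eps [Heps [a [b [Hbefore Hm]]]]]];
    exists eps; split; auto; intros u Hu; destruct (Hbefore u Hu) as [-> ->];
    rewrite Hm; unfold arrow_effect; destruct a; destruct b; intuition discriminate.
Qed.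

Lemma box_invariant_across_arrow w d m s lo : 0 <= lo < m -> m <= s <= T ->
  inbox w -> occ (Lam w d) m \/ occ (Mu w d) m ->
  (forall v, lo < v <= s -> box_event v -> v = m) ->
  (forall u, lo < u < m -> box_invariant (zeta u) (xi occ (fun _ => True) u)) ->
  box_invariant (zeta s) (xi occ (fun _ => True) s).
Proof.
  intros Hlo Hms Hw Harr Honly IH.
  destruct (arrow_effect_near w d m Harr) as [eps [Heps Heffect]].
  destruct (exists_between_lt lo (m - eps) m) as [u [Hu Hueps]]; [lra|lra|].
  assert (Honly' : forall v, u <= v <= s -> box_event v -> v = m)
    by (intros v Hv; apply Honly; lra).
  assert (Hw' : inbox (nb w d)) by (apply (nb_inbox w d m); auto; lra).
  assert (Hevent : forall e, occ e m -> e = Lam w d \/ e = Mu w d)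
    by (intros e Ho; destruct Harr as [Ha|Ha]; [left|right]; exact (occ_disjoint _ _ _ Ho Ha)).
  apply (box_invariant_arrow_update (zeta u) (zeta s) (xi occ (fun _ => True) u) (xi occ (fun _ => True) s) w (nb w d) Hw Hw');
    [destruct d; simpl; lia | | | | | | apply IH; lra].
  - intros z Hzb Hne. apply (zeta_const_across_event z u m s); auto; [lra|].
    intros e Ho. destruct (Hevent e Ho) as [-> | ->]; simpl; congruence.
  - rewrite (zeta_const_after_event (nb w d) m s Hw' ltac:(lra) ltac:(lra))
      by (intros v Hv; apply Honly'; lra).
    apply Heffect; lra.
  - intros z Hzb Hxi.
    destruct (proj1 (xi_across_event z u m s Hzb ltac:(lra) Hms Honly') Hxi)
      as [v [_ [Hxiv [[-> _]|[d' [Hnb Ho]]]]]]; [left; exact Hxiv|].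
    right. assert (v = w /\ d' = d) as [-> ->]
      by (destruct Ho as [Ho|Ho]; destruct (Hevent _ Ho) as [E|E];
          try discriminate E; injection E; auto).
    auto.
  - intros z Hzb Hxi.
    apply (xi_across_event z u m s Hzb ltac:(lra) Hms Honly').
    exists z; split; [|split]; auto. left; split; auto.
    intro Ho. destruct (Hevent _ Ho); discriminate.
  - intros Hxi.
    apply (xi_across_event (nb w d) u m s Hw' ltac:(lra) Hms Honly').
    exists w; split; [|split]; auto. right; exists d; auto.
Qed.

Lemma box_invariant_holds (L : list R) :
  (forall e s, inbox (site e) -> occ e s -> s <= T -> In s L) ->
  forall s, 0 <= s <= T -> box_invariant (zeta s) (xi occ (fun _ => True) s).
Proof.
  intros HL. apply (event_time_ind box_event T L).
  - intros v [e [_ Ho]]; eauto.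
  - intros v [e [He Ho]] Hv; eauto.
  - intros s Hs Hnone. apply box_invariant_init.
    + intros z Hzb. destruct zeta_process as [H0 _]. rewrite <- H0.
      apply zeta_const_inbox; auto; [lra|lra|].
      intros v e Hv He Ho. exfalso. apply (Hnone v); [lra | exists e; auto].
    + intros z Hzb. exists z; split; [exact I|]. apply cpath_stay; [lra|].
      intros v Hv HR. apply (Hnone v); [lra | exists (Rec z); auto].
  - intros m s lo Hlo Hms [e [He Ho]] Honly IH.
    destruct e as [w d|w d|w]; simpl in He.
    + exact (box_invariant_across_arrow w d m s lo Hlo Hms He (or_introl Ho) Honly IH).
    + exact (box_invariant_across_arrow w d m s lo Hlo Hms He (or_intror Ho) Honly IH).
    + exact (box_invariant_across_rec w m s lo Hlo Hms He Ho Honly IH).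
Qed.

End Box.

Lemma box_events_enumerable (n1 : Z) (k : nat) :
  exists es, forall e, (n1 < site e <= n1 + Z.of_nat k)%Z -> In e es.
Proof.
  induction k as [|k [es Hes]]; [exists nil; intros e H; lia|].
  set (z := (n1 + Z.of_nat (S k))%Z).
  exists (Lam z true :: Lam z false :: Mu z true :: Mu z false :: Rec z :: es).
  intros e He. destruct (Z.eq_dec (site e) z) as [Heq|Hne].
  - destruct e as [w [|] | w [|] | w]; simpl in Heq; subst; simpl; tauto.
  - do 5 right. apply Hes. unfold z in *. lia.
Qed.

Lemma event_times_of_list (occ : Realization) (T : R) (es : list Ev) :
  (forall e T, exists l : list R, forall s, occ e s -> s <= T -> In s l) ->
  exists L, forall e s, In e es -> occ e s -> s <= T -> In s L.
Proof.
  intros Hfin. induction es as [|a es [L HL]]; [exists nil; intros e s []|].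
  destruct (Hfin a T) as [l Hl].
  exists (l ++ L). intros e s [<-|He] Ho Hs; apply in_or_app; [left|right]; eauto.
Qed.

Lemma box_event_times_finite (occ : Realization) (T : R) (n1 n2 : Z) :
  (forall e T, exists l : list R, forall s, occ e s -> s <= T -> In s l) ->
  exists L, forall e s, (n1 < site e <= n2)%Z -> occ e s -> s <= T -> In s L.
Proof.
  intros Hfin.
  destruct (box_events_enumerable n1 (Z.to_nat (n2 - n1))) as [es Hes].
  destruct (event_times_of_list occ T es Hfin) as [L HL].
  exists L. intros e s He. apply HL, Hes. lia.
Qed.

Theorem mainTheorem6 :
  forall (lambda mu : R), 0 < lambda -> lambda <= mu ->
  forall (occ : Realization), realization_ok occ ->
  forall (zeta : R -> Z -> St), three_state_process occ std_init zeta ->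
  forall t : R, 0 <= t ->
    (exists x, occupied zeta t x) ->
    forall y : Z,
      occupied zeta t y <->
      (xi occ (fun _ => True) t y /\ in_hull (occupied zeta t) y).
Proof.
  intros lambda mu _ _ occ [Hpos [Hfin [Hdist [Hright Hleft]]]] zeta Hz t Ht _ y.
  assert (Hinv : forall p q, exists n1 n2, (n1 < p)%Z /\ (q <= n2)%Z /\
            box_invariant n1 n2 (zeta t) (xi occ (fun _ => True) t)).
  { intros p q.
    destruct (Hright t q) as [n2 [Hn2 Hb2]]. destruct (Hleft t (1 - p)%Z) as [n1 [Hn1 Hb1]].
    destruct (box_event_times_finite occ t n1 n2 Hfin) as [L HL].
    exists n1, n2; split; [lia|split; [lia|]].
    exact (box_invariant_holds occ zeta t n1 n2 Hpos Hdist Hz Hb1 Hb2 L HL t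
             ltac:(lra)). }
  split.
  - intros Hy. destruct (Hinv y y) as [n1 [n2 [H1 [H2 [Hocc _]]]]].
    split; [apply Hocc; [unfold inbox; lia | exact Hy]|].
    exists y, y; repeat split; auto; lia.
  - intros [Hxi [a [b [Ha [Hb Hab]]]]].
    destruct (Hinv a b) as [n1 [n2 [H1 [H2 [_ [_ Hhull]]]]]].
    apply (Hhull a y b); auto; unfold inbox; lia.
Qed.
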